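(* Let $G=(V,E)$ be an unweighted undirected graph, let $S\subseteq V$ be non-empty, let $u,v\in V$ and let $P(u,v)$ be a shortest path between $u$ and $v$ in $G$. If $P(u,v)$ is not contained in $G_S$, then $h_S(u)+h_S(v)\le d_G(u,v)+1$.
   Context: All edges have weight $1$. $d_G(u,v)$ is the shortest-path distance in $G$; $h_S(u)=\min_{s\in S}d_G(u,s)$. For $v\in V$, $E_S(v)$ is the set of edges incident to $v$ whose weight is at most $h_S(v)$; $E_S=\bigcup_{v\in V}E_S(v)$ and $G_S=(V,E_S)$. ''$P(u,v)$ is contained in $G_S$'' means every edge of $P(u,v)$ is in $E_S$. *)

(* A finite simple unweighted undirected graph is a
   symmetric irreflexive relation e on a finType T. Distances live in
   option nat, where None encodes +infinity (no path). *)
From mathcomp Require Import all_boot.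
Set Implicit Arguments. Unset Strict Implicit. Unset Printing Implicit Defensive.

Section Graph.
Variables (T : finType) (e : rel T).

Definition walk_len (n : nat) (u v : T) : bool :=
  [exists p : n.-tuple T, path e u p && (last u p == v)].

(* shortest-path distance d_G(u,v); a shortest walk (if any) is a simple
   path and so has fewer than #|T| edges. None = +infinity. *)
Definition dist (u v : T) : option nat :=
  omap val [pick n : 'I_#|T| | walk_len n u v &&
              [forall m : 'I_#|T|, (m < n) ==> ~~ walk_len m u v]].

Definition omin (a b : option nat) : option nat :=
  match a, b with
  | Some x, Some y => Some (minn x y)
  | Some x, None => Some x
  | None, _ => b
  end.
Definition oadd (a b : option nat) : option nat :=
  match a, b with Some x, Some y => Some (x + y) | _, _ => None end.
Definition ole (a b : option nat) : bool :=
  match a, b with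
  | _, None => true
  | None, Some _ => false
  | Some x, Some y => x <= y
  end.

Definition hS (S : {set T}) (u : T) : option nat :=
  \big[omin/None]_(s in S) dist u s.

(* E_S(x): edges incident to x of weight (=1) at most h_S(x).
   An edge {x,y} is in E_S iff it is in E_S(x) or in E_S(y). *)
Definition inES (S : {set T}) (x y : T) : bool :=
  e x y && (ole (Some 1) (hS S x) || ole (Some 1) (hS S y)).

Definition shortest_path (u v : T) (p : seq T) : Prop :=
  [/\ path e u p, last u p = v & dist u v = Some (size p)].

Definition path_in_GS (S : {set T}) (u : T) (p : seq T) : Prop :=
  path (inES S) u p.

End Graph.

From mathcomp Require Import all_boot.
Set Implicit Arguments. Unset Strict Implicit. Unset Printing Implicit Defensive.

(* An edge of G missing from G_S has both endpoints with h_S = 0, i.e. both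
   in S. Splitting the shortest path P(u,v) at such an edge {x,y} gives
   h_S(u) <= d(u,x) and h_S(v) <= d(y,v), and these two subpaths of P(u,v)
   have total length d(u,v) - 1. *)

Lemma ole_trans a b c : ole a b -> ole b c -> ole a c.
Proof. by case: a; case: b; case: c => //= x y z; apply: leq_trans. Qed.

Lemma ole_ominl a b : ole (omin a b) a.
Proof. by case: a; case: b => //= m n; apply: geq_minl. Qed.

Lemma ole_ominr a b : ole (omin a b) b.
Proof. by case: a; case: b => //= m n; apply: geq_minr. Qed.

Lemma ole_big_omin (I : eqType) (r : seq I) (P : pred I) (F : I -> option nat) i :
  i \in r -> P i -> ole (\big[omin/None]_(j <- r | P j) F j) (F i).
Proof.
elim: r => // a r IHr; rewrite in_cons big_cons => /orP[/eqP<- -> | ir Pi].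
  exact: ole_ominl.
case: (P a); last exact: IHr.
exact: ole_trans (ole_ominr _ _) (IHr ir Pi).
Qed.

Lemma omin_eq0 a b : omin a b = Some 0 -> a = Some 0 \/ b = Some 0.
Proof.
case: a b => [m|] [n|] //= [mn0]; [| by left; rewrite mn0 | by right; rewrite mn0].
by case: m n mn0 => [|m] [|n]; rewrite ?minnSS //; [left | left | right].
Qed.

Lemma path_split_not_rel (A : eqType) (r : rel A) x p : ~ path r x p ->
  exists p1 y p2, p = p1 ++ y :: p2 /\ ~~ r (last x p1) y.
Proof.
elim: p x => [|z q IHq] x //=.
case rxz: (r x z) => /= npath; last by exists [::], z, q; rewrite rxz.
have [p1 [y [p2 [-> nr]]]] := IHq z npath.
by exists (z :: p1), y, p2.
Qed.

Section Distances.
Variables (T : finType) (e : rel T).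

Lemma walk_lenP n u v :
  reflect (exists p, [/\ size p = n, path e u p & last u p = v]) (walk_len e n u v).
Proof.
apply: (iffP existsP) => [[t /andP[pt /eqP lt]] | [p [<- pp lp]]].
  by exists t; rewrite size_tuple.
by exists (in_tuple p); rewrite /= pp lp eqxx.
Qed.

Lemma walk_len0 u v : walk_len e 0 u v -> u = v.
Proof. by case/walk_lenP => -[[_ _ <-] | ? ? []]. Qed.

Lemma walk_len_sym : symmetric e -> forall n u v, walk_len e n u v = walk_len e n v u.
Proof.
move=> e_sym.
suff walk_rev n u v : walk_len e n u v -> walk_len e n v u.
  by move=> n u v; apply/idP/idP; apply: walk_rev.
case/walk_lenP => p [<- pp <-]; apply/walk_lenP.
exists (rev (belast u p)); split.
- by rewrite size_rev size_belast.
- by rewrite rev_path; apply: sub_path pp => x y /=; rewrite e_sym.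
- by case: p {pp} => [|x p] //=; rewrite rev_cons last_rcons.
Qed.

Lemma dist_sym : symmetric e -> forall u v, dist e u v = dist e v u.
Proof.
move=> e_sym u v; rewrite /dist; congr omap; apply: eq_pick => n /=.
by under eq_forallb => m do rewrite walk_len_sym //; rewrite walk_len_sym.
Qed.

Lemma dist_Some_walk u v k :
  dist e u v = Some k -> (k < #|T|) && walk_len e k u v.
Proof. by rewrite /dist; case: pickP => [n /andP[wn _]|] //= [<-]; rewrite ltn_ord. Qed.

Lemma dist_le_walk n u v : walk_len e n u v -> n < #|T| -> ole (dist e u v) (Some n).
Proof.
move=> wn n_lt; rewrite /dist; case: pickP => [m /andP[_ /forallP m_min] | no_min] /=.
  rewrite leqNgt; apply: contraL wn => lt_mn.
  by have := m_min (Ordinal n_lt); rewrite lt_mn.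
have ex_walk : exists k, (k < #|T|) && walk_len e k u v by exists n; rewrite n_lt wn.
case: (ex_minnP ex_walk) => k /andP[k_lt wk] k_min.
have := no_min (Ordinal k_lt); rewrite /= wk => /negbT/forallPn[m].
rewrite negb_imply negbK.
by case/andP=> lt_mk wm; have := k_min m; rewrite ltn_ord wm leqNgt lt_mk; apply.
Qed.

Lemma dist_le_path u p :
  path e u p -> size p < #|T| -> ole (dist e u (last u p)) (Some (size p)).
Proof. by move=> pp; apply: dist_le_walk; apply/walk_lenP; exists p. Qed.

Lemma hS_le_dist (S : {set T}) u s : s \in S -> ole (hS e S u) (dist e u s).
Proof. by move=> sS; apply: ole_big_omin; rewrite ?mem_index_enum. Qed.

Lemma hS_eq0 (S : {set T}) x : hS e S x = Some 0 -> x \in S.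
Proof.
apply: (big_ind (fun o => o = Some 0 -> x \in S)) => // [a b Pa Pb | s sS].
  by case/omin_eq0; [apply: Pa | apply: Pb].
by case/dist_Some_walk/andP => _ /walk_len0 ->.
Qed.

Lemma hS_lt1_mem (S : {set T}) x : ~~ ole (Some 1) (hS e S x) -> x \in S.
Proof. by case hSx: (hS e S x) => [[|k]|] // _; apply: hS_eq0. Qed.

Lemma not_inES_mem (S : {set T}) x y :
  e x y -> ~~ inES e S x y -> (x \in S) && (y \in S).
Proof. by move=> exy; rewrite /inES exy negb_or => /andP[/hS_lt1_mem -> /hS_lt1_mem ->]. Qed.

End Distances.

Theorem lemma23 (T : finType) (e : rel T) (He_sym : symmetric e)
  (He_irr : irreflexive e) (S : {set T}) (HS : S != set0)
  (u v : T) (p : seq T) :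
  shortest_path e u v p ->
  ~ path_in_GS e S u p ->
  ole (oadd (hS e S u) (hS e S v)) (oadd (dist e u v) (Some 1)).
Proof.
move=> [pp last_p d_uv] not_in_GS.
have [p1 [y [p2 [p_split not_inES]]]] := path_split_not_rel not_in_GS.
move: pp; rewrite p_split cat_path /= => /and3P[pp1 exy pp2].
have /andP[xS yS] := not_inES_mem exy not_inES.
have v_last : v = last y p2 by rewrite -last_p p_split last_cat.
have size_p : size p = size p1 + (size p2).+1 by rewrite p_split size_cat.
have /andP[p_lt _] := dist_Some_walk d_uv.
have hu : ole (hS e S u) (Some (size p1)).
  apply: ole_trans (hS_le_dist e u xS) (dist_le_path pp1 _).
  by rewrite (leq_ltn_trans _ p_lt) // size_p leq_addr.
have hv : ole (hS e S v) (Some (size p2)).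
  apply: ole_trans (hS_le_dist e v yS) _; rewrite dist_sym // v_last.
  by apply: dist_le_path pp2 _; rewrite (leq_ltn_trans _ p_lt) // size_p -addSnnS leq_addl.
rewrite d_uv size_p; case: (hS e S u) hu => [a|] //; case: (hS e S v) hv => [b|] //=.
by move=> b_le a_le; rewrite addn1 addnS; do 2 apply: leqW; apply: leq_add.
Qed.
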